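(* Let $(X,d,\mu)$ be a doubling metric measure space such that $(X,d)$ is connected and $L$-annularly connected for some $L\ge1$. Then $(X,d)$ satisfies a chain condition.
   Context: $\mu$ is doubling if every ball has positive finite measure and $\mu(B(x,2r))\le C_\mu\mu(B(x,r))$ for all $x\in X$, $r>0$. For $0<r<R$, $A(x,r,R)=\overline{B}(x,R)\setminus B(x,r)$. $X$ is $L$-annularly connected if whenever $y,z\in A(x,r,2r)$ for some $x\in X$, $r>0$, there is a curve joining $y$ and $z$ in $A(x,r/L,2rL)$. Chain condition: for every $\lambda\ge1$ there are constants $M\ge1$, $0<m\le1$ such that for each $x\in X$ and all $0<r<\operatorname{diam}(X)/8$ there is a sequence of balls $B_0,B_1,\dots$ with (1) $B_0\subset X\setminus B(x,r)$; (2) $M^{-1}\operatorname{diam}(B_i)\le\operatorname{dist}(x,B_i)\le M\operatorname{diam}(B_i)$; (3) $\operatorname{dist}(x,B_i)\le Mr2^{-mi}$; (4) there is a ball $D_i\subset B_i\cap B_{i+1}$ with $B_i\cup B_{i+1}\subset MD_i$, for all $i\ge0$; (5) no point of $X$ belongs to more than $M$ of the balls $\lambda B_i$ (where $\lambda B(y,s)=B(y,\lambda s)$). *)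

(* A metric space is given concretely as a carrier
   type T with a distance d : T -> T -> R (R : realType) satisfying the
   metric axioms; the measure lives on a measurableType structure on T whose
   sigma-algebra is the Borel sigma-algebra of the metric topology. *)
From HB Require Import structures.
From mathcomp Require Import all_boot all_order all_algebra.
From mathcomp Require Import all_classical all_reals all_analysis.
Set Implicit Arguments. Unset Strict Implicit. Unset Printing Implicit Defensive.
Import Order.TTheory GRing.Theory Num.Theory.
Local Open Scope classical_set_scope.
Local Open Scope ring_scope.

Section MetricDefs.
Context {R : realType} {T : Type} (d : T -> T -> R).

Definition is_metric : Prop :=
  (forall x y, 0 <= d x y) /\
  (forall x y, d x y = 0 <-> x = y) /\
  (forall x y, d x y = d y x) /\
  (forall x y z, d x z <= d x y + d y z).

Definition oball (x : T) (r : R) : set T := [set y | d x y < r].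
Definition cball (x : T) (r : R) : set T := [set y | d x y <= r].

Definition annulus (x : T) (r R' : R) : set T := cball x R' `\` oball x r.

Definition d_open (U : set T) : Prop :=
  forall x, U x -> exists2 r : R, 0 < r & oball x r `<=` U.

Definition d_connected : Prop :=
  ~ exists U V : set T, [/\ d_open U /\ d_open V, U !=set0, V !=set0,
      U `&` V = set0 & U `|` V = setT].

(* a curve joining y and z inside a set A: a continuous map gamma : [0,1] -> X
   (given as a function on R, only its values on [0,1] matter) *)
Definition curve_in (A : set T) (y z : T) : Prop :=
  exists gamma : R -> T,
    [/\ (forall t, 0 <= t <= 1 -> forall e, 0 < e ->
           exists2 del : R, 0 < del & forall s, 0 <= s <= 1 ->
             `|s - t| < del -> d (gamma s) (gamma t) < e),
        gamma 0 = y, gamma 1 = z &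
        forall t, 0 <= t <= 1 -> A (gamma t)].

Definition annularly_connected (L : R) : Prop :=
  forall (x : T) (r : R), 0 < r -> forall y z,
    annulus x r (2 * r) y -> annulus x r (2 * r) z ->
    curve_in (annulus x (r / L) (2 * r * L)) y z.

(* diameter of a set (in the extended reals; diam set0 = -oo) *)
Definition diam (A : set T) : \bar R :=
  ereal_sup [set (d y z)%:E | y in A & z in A].

Definition dist (x : T) (A : set T) : \bar R :=
  ereal_inf [set (d x y)%:E | y in A].

(* the chain condition; a ball is a pair (center, radius) with radius > 0,
   and lambda B(y,s) = B(y, lambda s) *)
Definition chain_condition : Prop :=
  forall lam : R, 1 <= lam ->
  exists M : R, exists m : R, [/\ 1 <= M, 0 < m, m <= 1 &
  forall (x : T) (r : R), 0 < r -> ((8 * r)%:E < diam setT)%E ->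
  exists (c : nat -> T) (s : nat -> R),
    (forall i, 0 < s i) /\
    [/\
        oball (c 0%N) (s 0%N) `<=` ~` oball x r,
        (forall i, ((M^-1)%:E * diam (oball (c i) (s i))
                      <= dist x (oball (c i) (s i)))%E /\
                   (dist x (oball (c i) (s i))
                      <= M%:E * diam (oball (c i) (s i)))%E),
        (forall i, (dist x (oball (c i) (s i))
                      <= (M * r * powR 2 (- (m * i%:R)))%:E)%E),
        (forall i, exists (c' : T) (s' : R), [/\ 0 < s',
            oball c' s' `<=` oball (c i) (s i) `&` oball (c i.+1) (s i.+1) &
            oball (c i) (s i) `|` oball (c i.+1) (s i.+1) `<=` oball c' (M * s')])
      &
        (forall y (S : seq nat), uniq S ->
            (forall i, i \in S -> oball (c i) (lam * s i) y) ->
            (size S)%:R <= M)]].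

End MetricDefs.

Section MeasureDefs.
Context {R : realType} {dsp : measure_display} {T : measurableType dsp}.
Variable (d : T -> T -> R) (mu : {measure set T -> \bar R}).

Definition borel_for_metric : Prop :=
  @measurable dsp T = <<s d_open d >>.

Definition doubling : Prop :=
  (forall x r, 0 < r -> (0 < mu (oball d x r))%E /\ (mu (oball d x r) < +oo)%E) /\
  exists C : R, forall x r, 0 < r ->
    (mu (oball d x (2 * r)) <= C%:E * mu (oball d x r))%E.

End MeasureDefs.

(* By connectedness there are points z_k with d(x, z_k) = 4 r 2^-k,
   and annular connectedness joins z_k to z_(k+1) by a curve in the annulus
   A(x, rho_k / L, 2 rho_k L), rho_k = 2 r 2^-k.  A shortest eps_k-chain along
   this curve, eps_k ~ rho_k / (lam L), has separated points, so the doubling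
   property bounds its length by some N independent of k.  Ball i is centred at
   the (i mod N)-th point of the chain of scale i / N, with radius
   ~ rho_(i/N) / (lam L).  Conditions (1)-(4) are then metric bookkeeping, and
   (5) holds because the lam-dilates of balls whose scales differ by a fixed J0
   cannot meet, while each scale contributes N balls. *)

From HB Require Import structures.
From mathcomp Require Import all_boot all_order all_algebra.
From mathcomp Require Import all_classical all_reals all_analysis.
From mathcomp Require Import lra ring zify.
Import Order.TTheory GRing.Theory Num.Theory.
Local Open Scope classical_set_scope.
Local Open Scope ring_scope.

Local Arguments oball {R T} d x r /.

Section Metric.
Context {R : realType} {T : Type} {d : T -> T -> R}.
Hypothesis hd : is_metric d.

Lemma metric_ge0 x y : 0 <= d x y.
Proof. by case: hd. Qed.

Lemma metricxx x : d x x = 0.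
Proof. by case: hd => _ [h _]; apply/h. Qed.

Lemma metricC x y : d x y = d y x.
Proof. by case: hd => _ [_ []]. Qed.

Lemma metric_triangle x y z : d x z <= d x y + d y z.
Proof. by case: hd => _ [_ []]. Qed.

Lemma annulusP x a b y : annulus d x a b y <-> a <= d x y <= b.
Proof.
rewrite /annulus /cball /oball /=; split.
  by case=> h1 /negP; rewrite -leNgt => h2; rewrite h1 h2.
by case/andP=> h1 h2; split => //; apply/negP; rewrite -leNgt.
Qed.

Lemma oball_open x r : d_open d (oball d x r).
Proof.
move=> y /= hy; exists (r - d x y); first by rewrite subr_gt0.
by move=> z /= hz; have := metric_triangle x y z; lra.
Qed.

Lemma connected_dist_ivt : d_connected d ->
  forall c w t, 0 < t -> t <= d c w -> exists q, d c q = t.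
Proof.
move=> hcon c w t t0 tw; apply: contrapT => hno.
have hne q : d c q != t by apply/eqP => h; apply: hno; exists q.
apply: hcon; exists (fun q => d c q < t), (fun q => t < d c q); split.
- split => y /= hy.
    exists (t - d c y); first by rewrite subr_gt0.
    by move=> z /= hz; have := metric_triangle c y z; lra.
  exists (d c y - t); first by rewrite subr_gt0.
  by move=> z /= hz; have := metric_triangle c z y; rewrite (metricC z y); lra.
- by exists c; rewrite /= metricxx.
- by exists w => /=; rewrite lt_neqAle tw andbT eq_sym.
- by apply/seteqP; split => y //= [] /= h1 h2; lra.
- apply/seteqP; split => y //= _.
  by have := hne y; rewrite neq_lt => /orP[h|h]; [left|right].
Qed.

Lemma diam_oball_le c s : (diam d (oball d c s) <= (2 * s)%:E)%E.
Proof.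
apply: ge_ereal_sup => _ [y /= hy] [z /= hz] <-; rewrite lee_fin.
by have := metric_triangle y c z; rewrite (metricC y c); lra.
Qed.

Lemma diam_oball_ge c s q : 0 < s -> d c q < s ->
  ((d c q)%:E <= diam d (oball d c s))%E.
Proof.
move=> s0 hq; apply: ereal_sup_ubound.
by exists c; [rewrite /oball /= metricxx | exists q].
Qed.

Lemma dist_oball_le x c s : 0 < s -> (dist d x (oball d c s) <= (d x c)%:E)%E.
Proof. by move=> s0; apply: ereal_inf_lbound; exists c; rewrite //= metricxx. Qed.

Lemma dist_oball_ge x c s : ((d x c - s)%:E <= dist d x (oball d c s))%E.
Proof.
apply: le_ereal_inf_tmp => _ [y /= hy] <-; rewrite lee_fin.
by have := metric_triangle x y c; rewrite (metricC y c); lra.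
Qed.

Lemma exists_far_point x (a : R) : ((2 * a)%:E < diam d setT)%E ->
  exists w, a < d x w.
Proof.
move=> ha; apply: contrapT => hno; move: ha; apply/negP; rewrite -leNgt.
apply: ge_ereal_sup => _ [y _] [z _] <-; rewrite lee_fin.
have far q : d x q <= a by rewrite leNgt; apply/negP => h; apply: hno; exists q.
by have := metric_triangle y x z; rewrite (metricC y x); have := far y; have := far z; lra.
Qed.

Lemma oball_overlap {c1 c2 : T} {s1 s2 M : R} : 3 <= M -> 0 < s1 ->
  d c1 c2 + s1 / 2 <= s2 -> s2 <= s1 ->
  exists (c' : T) (s' : R), [/\ 0 < s',
    oball d c' s' `<=` oball d c1 s1 `&` oball d c2 s2 &
    oball d c1 s1 `|` oball d c2 s2 `<=` oball d c' (M * s')].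
Proof.
move=> M3 s10 h1 h2; exists c1, (s1 / 2); split.
- by rewrite divr_gt0.
- move=> y /= hy; split => /=; first lra.
  by have := metric_triangle c2 c1 y; rewrite (metricC c2 c1); lra.
- have hM : s1 <= M * (s1 / 2) by nra.
  move=> y [] /= hy; first lra.
  by have := metric_triangle c1 c2 y; have := metric_ge0 c1 c2; nra.
Qed.

End Metric.

Section DiscreteChains.
Context {R : realType} {T : Type} (d : T -> T -> R) (A : set T) (eps : R).

Definition dchain (y z : T) (n : nat) (p : nat -> T) : Prop :=
  [/\ p 0%N = y, p n = z, (forall j, (j < n)%N -> d (p j) (p j.+1) < eps) &
      (forall j, (j <= n)%N -> A (p j))].

(* A shortest chain: cutting out [p a.+1, ..., p b.-1] whenever [d (p a) (p b) < eps]. *)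
Lemma dchain_shortest y z : (exists n p, dchain y z n p) ->
  exists n p, dchain y z n p /\
    (forall a b, (a.+2 <= b)%N -> (b <= n)%N -> eps <= d (p a) (p b)).
Proof.
case=> n; elim/ltn_ind: n => n IH [p hp].
have [hsep|hns] := pselect (forall a b, (a.+2 <= b)%N -> (b <= n)%N ->
  eps <= d (p a) (p b)); first by exists n, p.
have [a [b [ab bn hab]]] :
    exists a b, [/\ (a.+2 <= b)%N, (b <= n)%N & d (p a) (p b) < eps].
  apply: contrapT => hno; apply: hns => a b ab bn; rewrite leNgt; apply/negP => h.
  by apply: hno; exists a, b.
pose k := (b - a - 1)%N.
pose q j := if (j <= a)%N then p j else p (j + k)%N.
case: hp => p0 pn ps pA.
apply: (IH (n - k)%N); first by rewrite /k; lia.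
exists q; split.
- by rewrite /q leq0n.
- rewrite /q ifF; last by apply/negbTE; rewrite /k; lia.
  by have -> : (n - k + k = n)%N by rewrite /k; lia.
- move=> j jn; rewrite /q.
  have [ja|ja] := ltnP j a.
    by rewrite (ltnW ja); apply: ps; lia.
  have [->|jna] := eqVneq j a.
    by rewrite leqnn; have -> : (a.+1 + k = b)%N by rewrite /k; lia.
  have -> : (j <= a)%N = false by lia.
  by rewrite addSn; apply: ps; rewrite /k; lia.
- by move=> j jn; rewrite /q; case: ifP => h; apply: pA; rewrite /k; lia.
Qed.

Lemma dchain_rcons y a b n p : dchain y a n p -> A b -> d a b < eps ->
  dchain y b n.+1 (fun j => if (j <= n)%N then p j else b).
Proof.
case=> p0 pn ps pA Ab ab; split => //=.
- by rewrite ltnn.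
- move=> j; rewrite ltnS => jn; rewrite jn.
  have [/ps//|nj] := ltnP j n.
  have -> : j = n by lia.
  by rewrite pn.
- by move=> j jn; case: ifP => h; [apply: pA|].
Qed.

(* The supremum of the parameters reachable by an eps-chain is reachable, and equals 1. *)
Lemma curve_dchain y z : is_metric d -> curve_in d A y z -> 0 < eps ->
  exists n p, dchain y z n p.
Proof.
move=> hd [g [gc g0 g1 gA]] e0.
pose S := [set t : R | (0 <= t <= 1) /\ exists n p, dchain y (g t) n p].
have S0 : S 0.
  split; first by rewrite lexx ler01.
  by exists 0%N, (fun=> y); split => // j _; rewrite -g0; apply: gA; rewrite lexx ler01.
have hs : has_sup S by split; [exists 0 | exists 1 => t [] /andP[]].
set ts := sup S.
have ts01 : 0 <= ts <= 1.
  by rewrite sup_upper_bound // ge_sup //; [exists 0 | move=> t [] /andP[]].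
have [del del0 hdel] := gc ts ts01 eps e0.
have [t St] := sup_adherent del0 hs; rewrite -/ts => tlt.
have tsle : t <= ts by apply: sup_upper_bound.
have reach_ts : exists n p, dchain y (g ts) n p.
  case: St => t01 [n [p hp]]; exists n.+1; eexists; apply: dchain_rcons hp _ _.
    exact: gA.
  by apply: hdel => //; rewrite ler0_norm ?subr_le0 //; lra.
suff ts1 : ts = 1 by rewrite ts1 g1 in reach_ts.
apply: contrapT => hne.
have tsl1 : ts < 1 by rewrite lt_neqAle; case/andP: ts01 => _ ->; rewrite andbT; apply/eqP.
pose s := Num.min 1 (ts + del / 2).
have sgt : ts < s by rewrite /s lt_min tsl1 /=; lra.
have sle : s <= ts + del / 2 by rewrite /s ge_min lexx orbT.
have s01 : 0 <= s <= 1.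
  by rewrite [s <= 1]ge_min lexx andbT; case/andP: ts01 => ts0 _; lra.
have Ss : S s.
  split => //; case: reach_ts => n [p hp].
  exists n.+1; eexists; apply: dchain_rcons hp _ _; first exact: gA.
  by rewrite metricC //; apply: hdel => //; rewrite gtr0_norm ?subr_gt0 //; lra.
by have := sup_upper_bound hs Ss; rewrite -/ts; lra.
Qed.

End DiscreteChains.

Arguments dchain_shortest {R T d A eps y z}.
Arguments curve_dchain {R T d A eps y z}.

Lemma exists_expr2_ge {R : realType} (x : R) : exists k : nat, x <= 2 ^+ k.
Proof.
exists (Num.bound `|x|); apply: (le_trans (ler_norm x)); apply: ltW.
apply: (lt_le_trans (archi_boundP (normr_ge0 x))).
by rewrite -natrX ler_nat ltnW // ltn_expl.
Qed.

Lemma doubling_nonneg {R : realType} {dsp : measure_display} {T : measurableType dsp}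
  {d : T -> T -> R} {mu : {measure set T -> \bar R}} : doubling d mu ->
  exists C, [/\ 0 <= C,
    forall x r, 0 < r -> (0 < mu (oball d x r))%E /\ (mu (oball d x r) < +oo)%E &
    forall x r, 0 < r -> (mu (oball d x (2 * r)) <= C%:E * mu (oball d x r))%E].
Proof.
move=> [hpos [C hC]]; exists (Num.max C 1); split => //.
  by rewrite le_max ler01 orbT.
move=> x r r0; apply: (le_trans (hC x r r0)); apply: lee_wpmul2r => //.
by rewrite lee_fin le_max lexx.
Qed.

Definition dyadic {R : realType} (r : R) (k : nat) : R := 2 * r / 2 ^+ k.

Lemma dyadic_gt0 {R : realType} (r : R) k : 0 < r -> 0 < dyadic r k.
Proof. by move=> r0; rewrite divr_gt0 ?exprn_gt0 //; lra. Qed.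

Lemma dyadicS {R : realType} (r : R) k : dyadic r k.+1 = dyadic r k / 2.
Proof. by rewrite /dyadic exprS invfM mulrA mulrAC. Qed.

Lemma dyadic_le {R : realType} (r : R) k : 0 <= r -> dyadic r k <= 2 * r.
Proof.
move=> r0; rewrite /dyadic ler_pdivrMr ?exprn_gt0 // ler_peMr ?exprn_ege1 //; lra.
Qed.

Lemma dyadic0 {R : realType} (r : R) : dyadic r 0 = 2 * r.
Proof. by rewrite /dyadic expr0 divr1. Qed.

Section Doubling.
Context {R : realType} {dsp : measure_display} {T : measurableType dsp}.
Context {d : T -> T -> R} {mu : {measure set T -> \bar R}} {C : R}.
Hypotheses (hd : is_metric d) (hb : borel_for_metric d) (C0 : 0 <= C).
Hypothesis mu_oball :
  forall x r, 0 < r -> (0 < mu (oball d x r))%E /\ (mu (oball d x r) < +oo)%E.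
Hypothesis mu_doubling :
  forall x r, 0 < r -> (mu (oball d x (2 * r)) <= C%:E * mu (oball d x r))%E.

Lemma d_open_measurable U : d_open d U -> measurable U.
Proof. by move=> hU; rewrite hb; apply: sub_sigma_algebra. Qed.

Lemma oball_measurable x r : measurable (oball d x r).
Proof. exact/d_open_measurable/oball_open. Qed.

Lemma mu_oball_doublingXn j x s : 0 < s ->
  (mu (oball d x (2 ^+ j * s)) <= (C ^+ j)%:E * mu (oball d x s))%E.
Proof.
elim: j x s => [|j IH] x s s0; first by rewrite expr0 !mul1r mul1e.
rewrite exprS -mulrA (le_trans (mu_doubling _ _ _)) ?mulr_gt0 ?exprn_gt0 //.
rewrite exprS EFinM -muleA; apply: lee_wpmul2l; first by rewrite lee_fin.
exact: IH.
Qed.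

(* Volume argument: the disjoint balls B(q a, t) each have mass at least
   C^-k mu(B(x, R0)), and they all lie in B(x, 2 R0). *)
Lemma separated_points_card_le (k m : nat) x R0 t (q : nat -> T) :
  0 < t -> t <= R0 -> 2 * R0 <= 2 ^+ k * t ->
  (forall a, (a < m)%N -> d x (q a) <= R0) ->
  (forall a b, (a < b)%N -> (b < m)%N -> 2 * t <= d (q a) (q b)) ->
  m%:R <= C ^+ k.+1.
Proof.
move=> t0 tR hk hin hsep.
have [V0 Vfin] := mu_oball x R0 (lt_le_trans t0 tR).
set v := fine (mu (oball d x R0)).
have vE : mu (oball d x R0) = v%:E by rewrite fineK // ge0_fin_numE // ltW.
have v0 : 0 < v by rewrite -lte_fin -vE.
have Ck0 : (0 <= (C ^+ k)%:E)%E by rewrite lee_fin exprn_ge0.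
have low a : (a < m)%N -> (v%:E <= (C ^+ k)%:E * mu (oball d (q a) t))%E.
  move=> am; rewrite -vE; apply: (le_trans _ (mu_oball_doublingXn k (q a) t t0)).
  apply: le_measure; rewrite ?inE; try exact: oball_measurable.
  move=> y /= hy; have := metric_triangle hd (q a) x y.
  by rewrite (metricC hd (q a) x); have := hin a am; lra.
pose U j := [set y | exists2 a, (a < j)%N & d (q a) y < t].
have U_open j : d_open d (U j).
  move=> y [a aj hy]; exists (t - d (q a) y); first by rewrite subr_gt0.
  by move=> z /= hz; exists a => //; have := metric_triangle hd (q a) y z; lra.
have mu_U j : (j <= m)%N -> ((j%:R * v)%:E <= (C ^+ k)%:E * mu (U j))%E.
  elim: j => [|j IH] jm; first by rewrite mul0r mule_ge0.
  have -> : U j.+1 = U j `|` oball d (q j) t.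
    apply/seteqP; split => y.
      case=> a; rewrite ltnS leq_eqVlt => /orP[/eqP -> hy|aj hy]; first by right.
      by left; exists a.
    by case=> [[a aj hy]|hy]; [exists a => //; exact: ltnW | exists j].
  have disj : U j `&` oball d (q j) t = set0.
    apply/seteqP; split => y //= [[a aj hy] hy2]; have := hsep a j aj jm.
    by have := metric_triangle hd (q a) y (q j); rewrite (metricC hd y (q j)); lra.
  rewrite measureU //; [|exact: d_open_measurable|exact: oball_measurable].
  rewrite ge0_muleDr // -natr1 mulrDl mul1r EFinD.
  by apply: leeD; [apply: IH; exact: ltnW | exact: low].
have mu_Um : (mu (U m) <= (C * v)%:E)%E.
  rewrite EFinM -vE; apply: (le_trans _ (mu_doubling _ _ (lt_le_trans t0 tR))).
  apply: le_measure; rewrite ?inE; [exact: d_open_measurable|exact: oball_measurable|].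
  by move=> y [a am hy] /=; have := metric_triangle hd x (q a) y; have := hin a am; lra.
have := le_trans (mu_U m (leqnn m)) (lee_wpmul2l Ck0 mu_Um).
by rewrite -EFinM lee_fin => h; rewrite -(ler_pM2r v0) exprSr -mulrA.
Qed.

Context {L lam : R} {k0 N : nat}.
Hypothesis hac : annularly_connected d L.

(* A shortest fine chain along an annular curve has eps/2-separated even-indexed
   points in B(x, 2 rho L), so by doubling it has fewer than N steps. *)
Lemma annulus_chain {x rho y z} : 1 <= L -> 1 <= lam ->
  256 * lam * L ^+ 2 <= 2 ^+ k0 -> 2 * C ^+ k0.+1 < N%:R -> 0 < rho ->
  annulus d x rho (2 * rho) y -> annulus d x rho (2 * rho) z ->
  exists p : nat -> T, [/\ p 0%N = y, (forall j, (N.-1 <= j)%N -> p j = z),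
    (forall j, d (p j) (p j.+1) < rho / (32 * lam * L)) &
    (forall j, rho / L <= d x (p j) <= 2 * rho * L)].
Proof.
move=> L1 lam1 hk0 hN rho0 hy hz.
set eps := rho / (32 * lam * L).
have eps0 : 0 < eps by rewrite /eps divr_gt0 // !mulr_gt0 //; lra.
have [n [p [[p0 pn ps pA] hsep]]] :=
  dchain_shortest (curve_dchain hd (hac _ _ rho0 _ _ hy hz) eps0).
have pA' j : (j <= n)%N -> rho / L <= d x (p j) <= 2 * rho * L.
  by move=> jn; apply/annulusP; apply: pA.
have half_n : ((n %/ 2).+1)%:R <= C ^+ k0.+1.
  apply: (separated_points_card_le _ _ x (2 * rho * L) (eps / 2)
    (fun a => p (2 * a)%N)).
  - by rewrite divr_gt0.
  - have : eps <= rho.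
      by rewrite /eps ler_pdivrMr ?ler_peMr ?ltW //; [nra | rewrite !mulr_gt0 //; lra].
    nra.
  - have -> : 2 ^+ k0 * (eps / 2) = 2 ^+ k0 * rho / (64 * lam * L).
      by rewrite /eps; field; apply/andP; split; lra.
    rewrite ler_pdivlMr; last by rewrite !mulr_gt0 //; lra.
    have : 0 <= (2 ^+ k0 - 256 * lam * L ^+ 2) * rho by apply: mulr_ge0; lra.
    by rewrite expr2 in hk0 *; nra.
  - by move=> a am; have /andP[] := pA' (2 * a)%N (ltac:(lia)).
  - move=> a b ab bm; have -> : 2 * (eps / 2) = eps by lra.
    by apply: hsep; lia.
have nN : (n <= N.-1)%N.
  have n_lt : n%:R < 2 * ((n %/ 2).+1)%:R :> R by rewrite -natrM ltr_nat; lia.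
  have : n%:R < N%:R :> R by lra.
  by rewrite ltr_nat; lia.
exists (fun j => if (j <= n)%N then p j else z); split.
- by rewrite leq0n.
- by move=> j jN; case: ifP => // jn; have -> : j = n by lia.
- move=> j; case: ifP => jn; case: ifP => jn'; try lia.
  + by apply: ps; lia.
  + have -> : j = n by lia.
    by rewrite pn metricxx.
  + by rewrite metricxx.
- move=> j; case: ifP => jn; first exact: pA'.
  by apply/annulusP; rewrite -pn; apply: pA.
Qed.

Lemma dyadic_chains x r : d_connected d -> 1 <= L -> 1 <= lam ->
  256 * lam * L ^+ 2 <= 2 ^+ k0 -> 2 * C ^+ k0.+1 < N%:R ->
  0 < r -> ((8 * r)%:E < diam d setT)%E ->
  exists P : nat -> nat -> T, [/\ d x (P 0%N 0%N) = 4 * r,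
    (forall k, P k.+1 0%N = P k N.-1),
    (forall k j, d (P k j) (P k j.+1) < dyadic r k / (32 * lam * L)) &
    (forall k j, dyadic r k / L <= d x (P k j) <= 2 * dyadic r k * L)].
Proof.
move=> hcon L1 lam1 hk0 hN r0 hdiam.
have [w hw] : exists w, 4 * r < d x w.
  by apply: (exists_far_point hd); have -> : 2 * (4 * r) = 8 * r by lra.
have /choice[z hz] k : exists q, d x q = 2 * dyadic r k.
  apply: (connected_dist_ivt hd hcon _ w).
    by rewrite mulr_gt0 ?dyadic_gt0.
  by have := dyadic_le r k (ltW r0); lra.
have /choice[P hP] k : exists p : nat -> T, [/\ p 0%N = z k,
    forall j, (N.-1 <= j)%N -> p j = z k.+1,
    forall j, d (p j) (p j.+1) < dyadic r k / (32 * lam * L) &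
    forall j, dyadic r k / L <= d x (p j) <= 2 * dyadic r k * L].
  have rk0 := dyadic_gt0 r k r0.
  by apply: (annulus_chain L1 lam1 hk0 hN rk0); apply/annulusP; rewrite hz ?dyadicS; lra.
exists P; split => [|k|k j|k j].
- by case: (hP 0%N) => -> _ _ _; rewrite hz dyadic0; lra.
- by case: (hP k.+1) => -> _ _ _; case: (hP k) => _ -> .
- by case: (hP k).
- by case: (hP k).
Qed.

End Doubling.

Lemma divmodnS (N i : nat) : (0 < N)%N ->
  if (i %% N < N.-1)%N then ((i.+1 %/ N = i %/ N)%N /\ (i.+1 %% N = (i %% N).+1)%N)
  else ((i.+1 %/ N = (i %/ N).+1)%N /\ (i.+1 %% N = 0)%N).
Proof.
move=> N0; have ei := divn_eq i N; have lt := ltn_pmod i N0.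
case: ifP => h.
  have -> : (i.+1 = i %/ N * N + (i %% N).+1)%N by rewrite {1}ei addnS.
  have lt' : ((i %% N).+1 < N)%N by lia.
  by rewrite divnMDl // modnMDl (divn_small lt') (modn_small lt') addn0.
have -> : (i.+1 = (i %/ N).+1 * N + 0)%N by rewrite {1}ei mulSn; lia.
by rewrite divnMDl // modnMDl div0n mod0n; split; lia.
Qed.

Lemma invr_expr2_divn_le_powR {R : realType} (N i : nat) : (0 < N)%N ->
  (2 ^+ (i %/ N).+1)^-1 <= powR (2 : R) (- (N%:R^-1 * i%:R)).
Proof.
move=> N0; rewrite -(@powR_mulrn R 2 (i %/ N).+1) // -powRN.
apply: ler_powR; first lra.
rewrite lerN2 ler_pdivrMl ?ltr0n // -natrM ler_nat mulnC.
exact: ltnW (ltn_ceil i N0).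
Qed.

Section ChainOfBalls.
Context {R : realType} {T : Type} {d : T -> T -> R}.
Hypotheses (hd : is_metric d) (hcon : d_connected d).
Context {lam L M r : R} {N J0 : nat} {x : T} {P : nat -> nat -> T}.
Hypotheses (lam1 : 1 <= lam) (L1 : 1 <= L) (r0 : 0 < r) (N0 : (0 < N)%N).
Hypotheses (hJ0 : 6 * L ^+ 2 + 1 <= 2 ^+ J0)
  (M_ge : [/\ 64 * lam * L ^+ 2 <= M, 8 * L <= M, 3 <= M & (2 * J0 * N)%:R <= M]).
Hypotheses (P_start : d x (P 0%N 0%N) = 4 * r)
  (P_link : forall k, P k.+1 0%N = P k N.-1)
  (P_step : forall k j, d (P k j) (P k j.+1) < dyadic r k / (32 * lam * L))
  (P_annulus : forall k j, dyadic r k / L <= d x (P k j) <= 2 * dyadic r k * L).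

Let c i := P (i %/ N)%N (i %% N)%N.
Let a i := dyadic r (i %/ N)%N / L.
Let s i := a i / (16 * lam).

Let a_gt0 i : 0 < a i.
Proof. by rewrite divr_gt0 ?dyadic_gt0 //; have := L1; lra. Qed.

Let s_gt0 i : 0 < s i.
Proof. by rewrite divr_gt0 //; have := lam1; lra. Qed.

Let a_eq i : a i = 16 * lam * s i.
Proof. by rewrite /s; field; have := lam1; lra. Qed.

Let a_dyadic i : a i * 2 ^+ (i %/ N) = 2 * r / L.
Proof. by rewrite /a /dyadic; field; rewrite expf_neq0 //=; have := L1; lra. Qed.

Let dist_center i : a i <= d x (c i) <= 2 * a i * L ^+ 2.
Proof.
have -> : 2 * a i * L ^+ 2 = 2 * dyadic r (i %/ N)%N * L.
  by rewrite /a; field; have := L1; lra.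
exact: P_annulus.
Qed.

Let dist_center_s i : 3 * s i <= d x (c i) <= 64 * lam * L ^+ 2 * (s i / 2).
Proof.
have -> : 64 * lam * L ^+ 2 * (s i / 2) = 2 * a i * L ^+ 2 by rewrite a_eq; field.
have := lam1; have := s_gt0 i; have := a_eq i; case/andP: (dist_center i) => h1 h2.
by move=> *; apply/andP; split; nra.
Qed.

Lemma chain_ball0_outside : oball d (c 0%N) (s 0%N) `<=` ~` oball d x r.
Proof.
move=> y /= hy hxy.
have s0_le : s 0%N <= 2 * r.
  have a0_le : a 0%N <= 2 * r.
    by rewrite /a div0n dyadic0 ler_pdivrMr; have := L1; have := r0; [nra | lra].
  by have := a_eq 0%N; have := s_gt0 0%N; have := lam1; nra.
have dc0 : d x (c 0%N) = 4 * r by rewrite /c div0n mod0n.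
by have := metric_triangle hd x y (c 0%N); rewrite (metricC hd y); have := r0; lra.
Qed.

Lemma chain_dist_diam i :
  ((M^-1)%:E * diam d (oball d (c i) (s i)) <= dist d x (oball d (c i) (s i)))%E /\
  (dist d x (oball d (c i) (s i)) <= M%:E * diam d (oball d (c i) (s i)))%E.
Proof.
case: M_ge => M64 _ M3 _; have si0 := s_gt0 i.
case/andP: (dist_center_s i) => h3 h64.
have M0 : 0 < M by lra.
split.
- apply: (le_trans _ (dist_oball_ge hd x (c i) (s i))).
  apply: le_trans (lee_wpmul2l _ (diam_oball_le hd (c i) (s i))) _.
    by rewrite lee_fin invr_ge0 ltW.
  rewrite -EFinM lee_fin.
  have Mi1 : M^-1 <= 1 by rewrite invf_le1 //; lra.
  have Mi0 : 0 <= M^-1 by rewrite invr_ge0 ltW.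
  nra.
- have [q hq] : exists q, d (c i) q = s i / 2.
    apply: (connected_dist_ivt hd hcon _ x); first by rewrite divr_gt0.
    by rewrite (metricC hd); lra.
  apply: le_trans (dist_oball_le hd x (c i) (s i) si0) _.
  apply: (@le_trans _ _ (M * (s i / 2))%:E).
    by rewrite lee_fin (le_trans h64) // ler_wpM2r // divr_ge0 //; lra.
  rewrite EFinM; apply: lee_wpmul2l; first by rewrite lee_fin ltW.
  by rewrite -hq; apply: (diam_oball_ge hd) => //; rewrite hq; lra.
Qed.

Lemma chain_dist_decay i :
  (dist d x (oball d (c i) (s i)) <= (M * r * powR 2 (- (N%:R^-1 * i%:R)))%:E)%E.
Proof.
case: M_ge => _ M8 _ _; apply: le_trans (dist_oball_le hd x (c i) (s i) (s_gt0 i)) _.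
rewrite lee_fin; case/andP: (dist_center i) => _ /le_trans; apply.
have -> : 2 * a i * L ^+ 2 = 8 * L * r * (2 ^+ (i %/ N).+1)^-1.
  by rewrite /a /dyadic [2 ^+ _.+1]exprS; field; rewrite expf_neq0 //=; have := L1; lra.
rewrite -mulrA -[X in _ <= X]mulrA.
apply: ler_pM.
- by have := L1; lra.
- by rewrite mulr_ge0 ?invr_ge0 ?exprn_ge0 //; have := r0; lra.
- exact: M8.
- by rewrite ler_wpM2l ?invr_expr2_divn_le_powR //; have := r0; lra.
Qed.

(* Within a scale consecutive balls have equal radii and close centers;
   across scales they have the same center and the radius halves. *)
Lemma chain_consecutive_overlap i : exists (c' : T) (s' : R), [/\ 0 < s',
  oball d c' s' `<=` oball d (c i) (s i) `&` oball d (c i.+1) (s i.+1) &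
  oball d (c i) (s i) `|` oball d (c i.+1) (s i.+1) `<=` oball d c' (M * s')].
Proof.
case: M_ge => _ _ M3 _; have si0 := s_gt0 i.
have [[near same]|[same half]] :
    (d (c i) (c i.+1) < s i / 2 /\ s i.+1 = s i) \/ (c i.+1 = c i /\ s i.+1 = s i / 2).
  rewrite /s /a /c; have := divmodnS N i N0; case: ifP => hi [-> ->].
    left; split => //.
    have -> : dyadic r (i %/ N)%N / L / (16 * lam) / 2 =
              dyadic r (i %/ N)%N / (32 * lam * L) by field; have := L1; have := lam1; lra.
    exact: P_step.
  right; rewrite dyadicS; split; last by field; have := L1; have := lam1; lra.
  have -> : (i %% N = N.-1)%N by have := ltn_pmod i N0; move: hi => /negbT; lia.
  exact: P_link.
- by apply: (oball_overlap hd M3 si0); lra.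
- by apply: (oball_overlap hd M3 si0); rewrite half ?same ?(metricxx hd); lra.
Qed.

Let dist_in_ball y i : oball d (c i) (lam * s i) y ->
  15 / 16 * a i <= d x y <= 4 * a i * L ^+ 2.
Proof.
rewrite /= => hci; case/andP: (dist_center i) => h1 h2.
have := metric_triangle hd x y (c i); rewrite (metricC hd y (c i)).
have := metric_triangle hd x (c i) y; have := a_eq i.
have : a i <= a i * L ^+ 2 by rewrite ler_peMr ?exprn_ege1 // ltW.
by move=> *; apply/andP; split; nra.
Qed.

(* Balls of scales differing by J0 are too far apart in size to share a point. *)
Let scale_gap {y i i'} : oball d (c i) (lam * s i) y -> oball d (c i') (lam * s i') y ->
  (i %/ N < i' %/ N + J0)%N.
Proof.
move=> /dist_in_ball/andP[_ hi] /dist_in_ball/andP[hi' _].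
rewrite ltnNge; apply/negP => hle.
have e : 2 ^+ (i %/ N) = 2 ^+ (i %/ N - i' %/ N) * 2 ^+ (i' %/ N) :> R.
  by rewrite -exprD subnK //; lia.
have ea : a i' = a i * 2 ^+ (i %/ N - i' %/ N).
  apply: (mulIf (x := 2 ^+ (i' %/ N))); first by rewrite expf_neq0.
  by rewrite a_dyadic -[RHS]mulrA -e a_dyadic.
have eJ : 2 ^+ J0 <= 2 ^+ (i %/ N - i' %/ N) :> R by rewrite ler_eXn2l; [lia|lra].
move: ea eJ; move: (2 ^+ (i %/ N - i' %/ N) : R) => t ea eJ.
rewrite ea in hi'.
have : a i * (15 / 16 * t) <= a i * (4 * L ^+ 2) by lra.
by rewrite ler_pM2l ?a_gt0 //; have := hJ0; have := sqr_ge0 L; lra.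
Qed.

Lemma chain_bounded_overlap y (S : seq nat) : uniq S ->
  (forall i, i \in S -> oball d (c i) (lam * s i) y) -> (size S)%:R <= M.
Proof.
case: M_ge => _ _ _ MJ uS hS; apply: (le_trans _ MJ); rewrite ler_nat.
case: S uS hS => [//|i0 S'] uS hS.
have i0S : i0 \in i0 :: S' by rewrite inE eqxx.
suff sub : {subset i0 :: S' <= iota ((i0 %/ N - J0) * N) (2 * J0 * N)}.
  by have := uniq_leq_size uS sub; rewrite size_iota.
move=> i iS; rewrite mem_iota.
have := scale_gap (hS i iS) (hS i0 i0S).
have := scale_gap (hS i0 i0S) (hS i iS).
move=> lo hi; apply/andP; split.
  apply: leq_trans (leq_divM i N); rewrite leq_mul2r; apply/orP; right.
  by move: lo; move: (i %/ N)%N (i0 %/ N)%N => u v; lia.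
apply: leq_trans (ltn_ceil i N0) _; rewrite -mulnDl leq_mul2r; apply/orP; right.
by move: hi; move: (i %/ N)%N (i0 %/ N)%N => u v; lia.
Qed.

Lemma chain_of_balls : exists (c : nat -> T) (s : nat -> R),
  (forall i, 0 < s i) /\
  [/\ oball d (c 0%N) (s 0%N) `<=` ~` oball d x r,
      (forall i, ((M^-1)%:E * diam d (oball d (c i) (s i))
                    <= dist d x (oball d (c i) (s i)))%E /\
                 (dist d x (oball d (c i) (s i))
                    <= M%:E * diam d (oball d (c i) (s i)))%E),
      (forall i, (dist d x (oball d (c i) (s i))
                    <= (M * r * powR 2 (- (N%:R^-1 * i%:R)))%:E)%E),
      (forall i, exists (c' : T) (s' : R), [/\ 0 < s',
          oball d c' s' `<=` oball d (c i) (s i) `&` oball d (c i.+1) (s i.+1) &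
          oball d (c i) (s i) `|` oball d (c i.+1) (s i.+1) `<=` oball d c' (M * s')])
    & (forall y (S : seq nat), uniq S ->
          (forall i, i \in S -> oball d (c i) (lam * s i) y) -> (size S)%:R <= M)].
Proof.
exists c, s; split; first exact: s_gt0.
split; [exact: chain_ball0_outside | exact: chain_dist_diam | exact: chain_dist_decay |
  exact: chain_consecutive_overlap | exact: chain_bounded_overlap].
Qed.

End ChainOfBalls.

Theorem lemma3p3 (R : realType) (dsp : measure_display) (T : measurableType dsp)
  (d : T -> T -> R) (mu : {measure set T -> \bar R}) (L : R) :
  is_metric d -> borel_for_metric d -> doubling d mu ->
  d_connected d -> 1 <= L -> annularly_connected d L ->
  chain_condition d.
Proof.
move=> hd hb hdbl hcon L1 hac lam lam1.
have [C [C0 mu_oball mu_doubling]] := doubling_nonneg hdbl.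
have [k0 hk0] := exists_expr2_ge (256 * lam * L ^+ 2).
have [J0 hJ0] := exists_expr2_ge (6 * L ^+ 2 + 1).
have CXk0_ge0 : 0 <= 2 * C ^+ k0.+1 by rewrite mulr_ge0 ?exprn_ge0.
pose N := Num.bound (2 * C ^+ k0.+1).
have hN : 2 * C ^+ k0.+1 < N%:R := archi_boundP CXk0_ge0.
have N0 : (0 < N)%N by rewrite -(ltr0n R); apply: le_lt_trans hN.
pose M := 64 * lam * L ^+ 2 + 8 * L + 3 + (2 * J0 * N)%:R.
have M_ge : [/\ 64 * lam * L ^+ 2 <= M, 8 * L <= M, 3 <= M & (2 * J0 * N)%:R <= M].
  have h1 : 0 <= 64 * lam * L ^+ 2 by rewrite !mulr_ge0 ?exprn_ge0 //; lra.
  have h2 : 0 <= (2 * J0 * N)%:R :> R by rewrite ler0n.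
  by rewrite /M; split; lra.
exists M, N%:R^-1; split => [||| x r r0 hdiam].
- by case: M_ge; lra.
- by rewrite invr_gt0 ltr0n.
- by rewrite invf_le1 ?ltr0n // ler1n.
have [P [P_start P_link P_step P_annulus]] :=
  dyadic_chains hd hb C0 mu_oball mu_doubling hac x r hcon L1 lam1 hk0 hN r0 hdiam.
exact: (chain_of_balls hd hcon lam1 L1 r0 N0 hJ0 M_ge P_start P_link P_step P_annulus).
Qed.
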